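(* Let $r>\frac{2}{3}$, $D>0$, $\mu\in\mathbb{R}$ and $c<u_b(r)$ be fixed, where $u_b(r)$ is defined in the context. Consider the system $$\dot q=s,\qquad \dot s=\frac{1}{D}\big((u+\mu)s-f(q,u;r)\big),\qquad \dot u=\frac{\epsilon}{u-c}\,g(q,u)$$ with $f(q,u;r)=q\big(r+u-2-(r+0.1)(q-1)^2\big)$ and $g(q,u)=2-u+2q(1-u)$. Then the equilibria $X_1=(0,0,2)$ and $X_2=(q_{b,+}(r),0,u_b(r))$ of this system are hyperbolic for all $\epsilon>0$ sufficiently small.
   Context: This is the traveling-wave ODE (with $\dot{}=d/d\xi$, $\xi=x-ct$) of the Barkley pipe-flow model $q_t=Dq_{xx}+(\zeta-u)q_x+f(q,u;r)$, $u_t=-uu_x+\epsilon g(q,u)$, with $\mu=-(\zeta+c)$. For $r>\frac23$, $u_b(r)\in(\frac65,\frac43)$ denotes the unique value of $u$ in $(\frac65,\frac43)$ such that, with $q_{b,+}(r)=1+\sqrt{\frac{r+u_b(r)-2}{r+0.1}}>1$, one has $g(q_{b,+}(r),u_b(r))=0$; then $X_2=(q_{b,+}(r),0,u_b(r))$ is an equilibrium (the ''turbulent'' state) and $X_1=(0,0,2)$ is the ''laminar'' equilibrium. *)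

From HB Require Import structures.
From mathcomp Require Import all_boot all_order all_algebra.
From mathcomp Require Import all_classical all_reals all_analysis.
From mathcomp Require Import complex.
Set Implicit Arguments. Unset Strict Implicit. Unset Printing Implicit Defensive.
Import Order.TTheory GRing.Theory Num.Theory.
Import numFieldNormedType.Exports.
Local Open Scope ring_scope.

Section Barkley.
Variable R : realType.

Definition fB (r q u : R) : R := q * (r + u - 2 - (r + 1/10) * (q - 1) ^+ 2).
Definition gB (q u : R) : R := 2 - u + 2 * q * (1 - u).

(* q_{b,+}(r) as a function of the value ub = u_b(r) *)
Definition qbplus (r ub : R) : R := 1 + Num.sqrt ((r + ub - 2) / (r + 1/10)).

(* the characterization of u_b(r) from the context *)
Definition is_ub (r ub : R) : Prop :=
  6/5 < ub < 4/3 /\ gB (qbplus r ub) ub = 0.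

(* state X = (q, s, u) as a row vector: X 0 0 = q, X 0 1 = s, X 0 2 = u *)
Definition vfield (D mu c eps r : R) (X : 'rV[R]_3) : 'rV[R]_3 :=
  let q := X ord0 0 in let s := X ord0 1 in let u := X ord0 2 in
  \row_(i < 3)
    (if i == 0 :> nat then s
     else if i == 1 :> nat then D^-1 * ((u + mu) * s - fB r q u)
     else eps / (u - c) * gB q u).

Definition hyperbolic_equilibrium (F : 'rV[R]_3 -> 'rV[R]_3) (X : 'rV[R]_3) : Prop :=
  F X = 0 /\ differentiable F X /\
  forall w : R,
    \det (map_mx (fun x : R => (x%:C)%C) ('J F X) - (0 +i* w)%C%:M) != 0.

Definition X1 : 'rV[R]_3 := \row_(i < 3) (if i == 2 :> nat then 2 else 0).
Definition X2 (r ub : R) : 'rV[R]_3 :=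
  \row_(i < 3) (if i == 0 :> nat then qbplus r ub
                else if i == 1 :> nat then 0 else ub).

End Barkley.

From HB Require Import structures.
From mathcomp Require Import all_boot all_order all_algebra.
From mathcomp Require Import all_classical all_reals all_analysis.
From mathcomp Require Import complex ring lra.
Import Order.TTheory GRing.Theory Num.Theory.
Import numFieldNormedType.Exports.
Set Implicit Arguments. Unset Strict Implicit. Unset Printing Implicit Defensive.
Local Open Scope ring_scope.

(* At an equilibrium with [s = 0] and [f = g = 0], the Jacobian has positive
   determinant [d], trace [t] and sum of principal 2x2 minors [m] such that
   [m > 0] forces [t < 0].  Since [det (J - iw) = (d - t w^2) + i (w^3 - m w)],
   an eigenvalue [iw] would need [d = t w^2] and [w (w^2 - m) = 0]: [w = 0] is
   excluded by [d > 0], and [w^2 = m > 0] would give [0 < d = t m < 0].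
   Both equilibria are therefore hyperbolic for every [eps > 0]. *)

Lemma big_ord3 (V : nmodType) (F : 'I_3 -> V) : \sum_(i < 3) F i = F 0 + F 1 + F 2.
Proof.
rewrite !big_ord_recl big_ord0 addr0 addrA.
by congr (_ + F _ + F _); apply: val_inj.
Qed.

Lemma det_mx33 (R : comPzRingType) (M : 'M[R]_3) : \det M =
  M 0 0 * (M 1 1 * M 2 2 - M 1 2 * M 2 1)
  - M 0 1 * (M 1 0 * M 2 2 - M 1 2 * M 2 0)
  + M 0 2 * (M 1 0 * M 2 1 - M 1 1 * M 2 0).
Proof.
have inordE (i : 'I_3) : inord i = i by rewrite inord_val.
have -> : M = \matrix_(i, j) M (inord i) (inord j).
  by apply/matrixP => i j; rewrite mxE !inordE.
rewrite (expand_det_row _ 0) !big_ord_recl big_ord0 /cofactor.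
rewrite !(expand_det_row _ 0) !big_ord_recl !big_ord0 /cofactor !det_mx11 !mxE.
rewrite /bump /= (inordE 0) (inordE 1) (inordE 2) !expr0 !expr1; ring.
Qed.

Lemma mxtrace33 (R : pzSemiRingType) (M : 'M[R]_3) : \tr M = M 0 0 + M 1 1 + M 2 2.
Proof. exact: big_ord3. Qed.

Section ImaginaryEigenvalues.
Variable R : realFieldType.
Local Open Scope complex_scope.

Definition sum_minors2 (A : 'M[R]_3) : R :=
  (A 0 0 * A 1 1 - A 0 1 * A 1 0) + (A 0 0 * A 2 2 - A 0 2 * A 2 0)
  + (A 1 1 * A 2 2 - A 1 2 * A 2 1).

Lemma det_sub_imaginary (A : 'M[R]_3) (w : R) :
  \det (map_mx (fun x => x%:C) A - (0 +i* w)%:M) =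
  (\det A - \tr A * w ^+ 2) +i* (w ^+ 3 - sum_minors2 A * w).
Proof.
rewrite !det_mx33 mxtrace33 !mxE /= ?mulr1n ?mulr0n ?subr0.
have realC (a : R) : a%:C = a +i* 0 by [].
(* complex arithmetic on [a +i* b] computes componentwise *)
rewrite !realC; set lhs := LHS; have -> : lhs = _ +i* _ := erefl.
by congr (_ +i* _); rewrite /sum_minors2; ring.
Qed.

Lemma det_sub_imaginary_neq0 (A : 'M[R]_3) (w : R) : \det A != 0 ->
  (0 < sum_minors2 A -> \tr A * sum_minors2 A != \det A) ->
  \det (map_mx (fun x => x%:C) A - (0 +i* w)%:M) != 0.
Proof.
move=> detA_neq0 tr_m_neq_det; rewrite det_sub_imaginary.
apply/eqP; case=> /eqP re0 /eqP im0.
have [w0 | w_neq0] := eqVneq w 0.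
  by move: re0; rewrite w0 expr0n mulr0 subr0 (negbTE detA_neq0).
have m_eq : sum_minors2 A = w ^+ 2.
  apply/eqP; move: im0; rewrite (_ : _ - _ = w * (w ^+ 2 - sum_minors2 A)); last by ring.
  by rewrite mulf_eq0 (negbTE w_neq0) subr_eq0 eq_sym.
have m_gt0 : 0 < sum_minors2 A by rewrite m_eq lt_def sqrf_eq0 w_neq0 sqr_ge0.
have detA_eq : \det A = \tr A * sum_minors2 A by apply/eqP; rewrite -subr_eq0 m_eq.
by move: (tr_m_neq_det m_gt0); rewrite detA_eq eqxx.
Qed.
End ImaginaryEigenvalues.

Section DifferentialRules.
Context {R : numFieldType} {V W : normedModType R}.

Lemma is_diffV (f df : V -> R) x : is_diff x f df -> f x != 0 ->
  is_diff x (fun y => (f y)^-1) (- (f x) ^- 2 *: df).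
Proof.
move=> f_diff fx_neq0; apply: DiffDef; first exact: differentiableV.
by rewrite diffV // diff_val.
Qed.

Global Instance is_diffZl (k dk : V -> R) (e : W) x :
  is_diff x k dk -> is_diff x (fun z => k z *: e) (fun z => dk z *: e).
Proof.
move=> k_diff; apply: DiffDef; first exact: differentiableZl.
by rewrite diffZl // diff_val.
Qed.

Lemma is_diff_sum n (f df : 'I_n -> V -> W) x :
  (forall i, is_diff x (f i) (df i)) ->
  is_diff x (\sum_(i < n) f i) (\sum_(i < n) df i).
Proof.
move=> f_diff; apply: (big_ind2 (fun F dF => is_diff x F dF)) => //.
- exact: is_diff_cst.
- by move=> F G dF dG ? ?; apply: is_diffD.
Qed.

End DifferentialRules.

Section RowVectorFunctions.
Variables (R : realType) (m n : nat).

Definition coord_rV (k : 'I_m) (X : 'rV[R]_m) : R := X ord0 k.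

Lemma coord_rV_is_linear k : linear (coord_rV k).
Proof. by move=> a X Y; rewrite /coord_rV !mxE. Qed.

HB.instance Definition _ k :=
  GRing.isLinear.Build R 'rV[R]_m R _ (coord_rV k) (coord_rV_is_linear k).

Global Instance is_diff_coord_rV k x : is_diff x (coord_rV k) (coord_rV k).
Proof.
have coord_cont : continuous (coord_rV k) by exact: coord_continuous.
apply: DiffDef; first exact: linear_differentiable.
by rewrite diff_lin.
Qed.

Lemma is_diff_rV_coord (F : 'rV[R]_m -> 'rV[R]_n) (J : 'M[R]_(m, n)) x :
  (forall k, is_diff x (fun X => F X ord0 k) (fun v => (v *m J) ord0 k)) ->
  is_diff x F (mulmxr J).
Proof.
move=> F_diff.
have sum_delta (G : 'rV[R]_m -> 'rV[R]_n) :
    G = \sum_(k < n) (fun X => G X ord0 k *: delta_mx 0 k).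
  by apply/funext => X; rewrite fct_sumE [LHS]row_sum_delta.
by rewrite [F]sum_delta [mulmxr J]sum_delta; apply: is_diff_sum.
Qed.

Lemma is_diff_jacobian (F : 'rV[R]_m -> 'rV[R]_n) (J : 'M[R]_(m, n)) x :
  is_diff x F (mulmxr J) -> 'J F x = J.
Proof.
move=> F_diff; rewrite /jacobian diff_val.
by apply/row_matrixP => i; rewrite !rowE mul_rV_lin1.
Qed.

End RowVectorFunctions.

Section BarkleyJacobian.
Variables (R : realType) (D mu c eps r : R).

Definition fB_dq (q u : R) : R :=
  r + u - 2 - (r + 1/10) * (q - 1) ^+ 2 - 2 * (r + 1/10) * q * (q - 1).

(* Entry [(i, j)] is the derivative of the [j]-th component with respect to the
   [i]-th variable, since ['J] acts on row vectors. *)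
Definition barkley_jacobian (q s u : R) : 'M[R]_3 := \matrix_(i < 3, j < 3)
  match i : nat, j : nat with
  | 0, 0 => 0
  | 0, 1 => - D^-1 * fB_dq q u
  | 0, 2 => eps / (u - c) * (2 * (1 - u))
  | 1, 0 => 1
  | 1, 1 => D^-1 * (u + mu)
  | 1, 2 => 0
  | 2, 0 => 0
  | 2, 1 => D^-1 * (s - q)
  | 2, 2 => eps * (- (u - c) ^- 2 * gB q u + (u - c)^-1 * (-1 - 2 * q))
  | _, _ => 0
  end.

Lemma is_diff_vfield_coord (x : 'rV[R]_3) k : x ord0 2 != c ->
  is_diff x (fun X => vfield D mu c eps r X ord0 k)
    (fun v => (v *m barkley_jacobian (x ord0 0) (x ord0 1) (x ord0 2)) ord0 k).
Proof.
move=> u_neq_c.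
have u_c_diff : is_diff x (coord_rV 2 - cst c) (coord_rV 2).
  by apply: (is_diff_eq (is_diffB _ _)); rewrite subr0.
have inv_diff : is_diff x (fun y => (coord_rV 2 y - c)^-1)
    (- (x ord0 2 - c) ^- 2 *: coord_rV 2).
  by apply: is_diffV u_c_diff _; rewrite subr_eq0.
have zeroE (v : 'rV[R]_3) : (0 : 'rV[R]_3 -> R) v = 0 by [].
have scaleE (a b : R) : a *: b = a * b by [].
have coordP (F dF : 'rV[R]_3 -> R) : is_diff x F dF ->
    (forall X, vfield D mu c eps r X ord0 k = F X) ->
    (forall v, dF v = (v *m barkley_jacobian (x ord0 0) (x ord0 1) (x ord0 2)) ord0 k) ->
    is_diff x (fun X => vfield D mu c eps r X ord0 k)
      (fun v => (v *m barkley_jacobian (x ord0 0) (x ord0 1) (x ord0 2)) ord0 k).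
  move=> F_diff FE dFE.
  have -> : (fun X => vfield D mu c eps r X ord0 k) = F by apply/funext.
  by apply: is_diff_eq F_diff _; apply/funext.
case: k coordP => [[|[|[|k]]] k_lt] coordP; last by exfalso; clear coordP; move: k_lt.
- apply: (coordP _ _ (_ : is_diff x (coord_rV 1) _)); first by move=> X; rewrite mxE.
  by move=> v; rewrite mxE big_ord3 !mxE /= /coord_rV; ring.
- apply: (coordP _ _ (_ : is_diff x (cst D^-1 * ((coord_rV 2 + cst mu) * coord_rV 1 - coord_rV 0 *
     (cst r + coord_rV 2 - cst 2 - cst (r + 1/10) * (coord_rV 0 - cst 1) ^+ 2))) _)).
    by move=> X; rewrite mxE.
  move=> v; rewrite mxE big_ord3 !mxE /= !fctE /= !zeroE !scaleE /coord_rV /fB_dq.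
  ring.
- apply: (coordP _ _ (_ : is_diff x (cst eps * (fun y => (coord_rV 2 y - c)^-1) *
     (cst 2 - coord_rV 2 + cst 2 * coord_rV 0 * (cst 1 - coord_rV 2))) _)).
    by move=> X; rewrite mxE.
  move=> v; rewrite mxE big_ord3 !mxE /= !fctE /= !zeroE !scaleE /coord_rV /gB.
  ring.
Qed.

Lemma vfield_jacobian (x : 'rV[R]_3) : x ord0 2 != c ->
  differentiable (vfield D mu c eps r) x /\
  'J (vfield D mu c eps r) x = barkley_jacobian (x ord0 0) (x ord0 1) (x ord0 2) :> 'M[R]_3.
Proof.
move=> u_neq_c; have F_diff := is_diff_rV_coord (fun k => is_diff_vfield_coord k u_neq_c).
by split; [exact: ex_diff | exact: is_diff_jacobian].
Qed.

Lemma barkley_jacobian_hyperbolic (q u w : R) : 0 < D -> 0 < eps -> c < u ->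
  gB q u = 0 -> fB_dq q u < 0 -> 0 <= q -> 1 <= u ->
  \det (map_mx (fun x => (x%:C)%C) (barkley_jacobian q 0 u) - (0 +i* w)%C%:M) != 0.
Proof.
move=> D_gt0 eps_gt0 c_lt_u g0 fq_lt0 q_ge0 u_ge1.
set k := eps / (u - c); set A := - D^-1 * fB_dq q u; set B := D^-1 * (u + mu).
set C := D^-1 * q; set G := 2 * (1 - u); set H := -1 - 2 * q.
have k_gt0 : 0 < k by rewrite divr_gt0 ?subr_gt0.
have A_gt0 : 0 < A by rewrite /A mulNr oppr_gt0 pmulr_rlt0 ?invr_gt0.
have H_lt0 : H < 0 by rewrite /H; lra.
have G_le0 : G <= 0 by rewrite /G; lra.
have C_ge0 : 0 <= C by rewrite /C mulr_ge0 // invr_ge0 ltW.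
have GC_le0 : G * C <= 0 by rewrite mulr_le0_ge0.
set J := barkley_jacobian q 0 u.
have detE : \det J = - k * (A * H + G * C).
  by rewrite det_mx33 !mxE /= g0 /k /A /B /C /G /H; ring.
have trE : \tr J = B + k * H.
  by rewrite mxtrace33 !mxE /= g0 /k /B /H; ring.
have mE : sum_minors2 J = - A + B * (k * H).
  by rewrite /sum_minors2 !mxE /= g0 /k /A /B /C /G /H; ring.
have kH_lt0 : k * H < 0 by rewrite pmulr_rlt0.
have det_gt0 : 0 < \det J by rewrite detE mulNr -mulrN pmulr_rgt0 // oppr_gt0; nra.
apply: det_sub_imaginary_neq0 => [|m_gt0]; first by rewrite gt_eqF.
have B_lt0 : B < 0 by move: m_gt0; rewrite mE; nra.
by rewrite lt_eqF // trE mE; nra.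
Qed.

Lemma barkley_hyperbolic_equilibrium (X : 'rV[R]_3) : 0 < D -> 0 < eps ->
  X ord0 1 = 0 -> fB r (X ord0 0) (X ord0 2) = 0 -> gB (X ord0 0) (X ord0 2) = 0 ->
  fB_dq (X ord0 0) (X ord0 2) < 0 -> 0 <= X ord0 0 -> 1 <= X ord0 2 -> c < X ord0 2 ->
  hyperbolic_equilibrium (vfield D mu c eps r) X.
Proof.
move=> D_gt0 eps_gt0 s0 f0 g0 fq_lt0 q_ge0 u_ge1 c_lt_u.
have [F_diff JE] := vfield_jacobian (negbT (gt_eqF c_lt_u)).
split; last split=> // w.
  apply/rowP => j; rewrite !mxE.
  by case: j => [[|[|[|j]]] j_lt] //=; rewrite ?s0 ?f0 ?g0 ?mulr0 ?subr0 ?mulr0.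
by rewrite JE s0; apply: barkley_jacobian_hyperbolic.
Qed.

End BarkleyJacobian.

Lemma qbplusP (R : realType) (r ub : R) : 0 < r + 1/10 -> is_ub r ub ->
  exists2 s, 0 < s & qbplus r ub = 1 + s /\ (r + 1/10) * s ^+ 2 = r + ub - 2.
Proof.
set a := r + 1/10; move=> a_gt0 [/andP[_ ub_lt] g0].
have [radicand_le0 | radicand_gt0] := lerP ((r + ub - 2) / a) 0.
  by move: g0; rewrite /qbplus -/a (ler0_sqrtr radicand_le0) addr0 /gB; lra.
exists (Num.sqrt ((r + ub - 2) / a)); first by rewrite sqrtr_gt0.
by split=> //; rewrite sqr_sqrtr ?ltW // mulrC divfK ?gt_eqF.
Qed.

Theorem theorem1 (R : realType) (r D mu c ub : R) :
  2/3 < r -> 0 < D -> is_ub r ub -> c < ub ->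
  exists eps0 : R, 0 < eps0 /\
    forall eps : R, 0 < eps -> eps < eps0 ->
      hyperbolic_equilibrium (vfield D mu c eps r) (X1 R) /\
      hyperbolic_equilibrium (vfield D mu c eps r) (X2 r ub).
Proof.
move=> r_gt D_gt0 ubP c_lt_ub; exists 1; split=> // eps eps_gt0 _.
have [/andP[ub_gt ub_lt] g0] := ubP.
have a_gt0 : 0 < r + 1/10 by lra.
have [s s_gt0 [qbE s_eq]] := qbplusP a_gt0 ubP.
rewrite qbE in g0.
split; apply: barkley_hyperbolic_equilibrium; rewrite ?mxE /= ?qbE //.
- by rewrite /fB mul0r.
- by rewrite /gB; ring.
- by rewrite /fB_dq; lra.
- lra.
- lra.
- by rewrite /fB -s_eq; ring.
- rewrite /fB_dq -s_eq (_ : _ - _ = - (2 * (r + 1/10) * (1 + s) * s)); last by ring.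
  by rewrite oppr_lt0 !mulr_gt0 //; lra.
- lra.
- lra.
Qed.
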